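(* Every para-Sasakian manifold $(\mathcal M,\psi,\zeta,\tau,g)$ is flat as a bi-Legendrian manifold: the Pang invariants $\Pi_+$ and $\Pi_-$ of the Legendrian foliations tangent to $\mathcal V^+$ and $\mathcal V^-$ both vanish.
   Context: Almost paracontact metric structure $(\psi,\zeta,\tau,g)$: $\psi^2=\mathrm{Id}-\tau\otimes\zeta$, $\tau(\zeta)=1$, $g(\psi X,\psi Y)=-g(X,Y)+\tau(X)\tau(Y)$; $\Psi(X,Y)=g(X,\psi Y)$; $2d\tau(X,Y)=X\tau(Y)-Y\tau(X)-\tau([X,Y])$. Para-Sasakian: $d\tau=\Psi$ and normal, $[\psi,\psi]-2d\tau\otimes\zeta=0$ ($[\psi,\psi]$ the Nijenhuis torsion). $\mathcal V^\pm$ are the $\pm1$-eigendistributions of $\psi$. Pang invariants: $\Pi_\pm(X,Y)=-\tau([[\zeta,X],Y])$ for sections $X,Y$ of $\mathcal V^\pm$. *)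

From HB Require Import structures.
From mathcomp Require Import all_boot all_order all_algebra.
From mathcomp Require Import all_classical all_reals all_analysis.
Set Implicit Arguments. Unset Strict Implicit. Unset Printing Implicit Defensive.
Import Order.TTheory GRing.Theory Num.Theory.
Import numFieldNormedType.Exports.
Local Open Scope classical_set_scope.
Local Open Scope ring_scope.

(* Local (chart) model of a manifold: an open set U of R^m = 'rV[R]_m.
   Vector fields are maps 'rV_m -> 'rV_m; (1,1)-tensors are matrix fields
   acting on row vectors (v |-> v *m psi x); 1-forms are column-vector fields
   (v |-> (v *m tau x) 0 0); bilinear forms are matrix fields
   ((v,w) |-> (v *m g x *m w^T) 0 0). *)

Fixpoint smooth_k (R : realType) (m : nat) (W : normedModType R)
    (U : set 'rV[R]_m) (k : nat) (f : 'rV[R]_m -> W) : Prop :=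
  match k with
  | 0 => forall x, U x -> {for x, continuous f}
  | k'.+1 => (forall x v, U x -> derivable f x v) /\
             (forall v, smooth_k U k' ('D_v f))
  end.

Definition smooth (R : realType) (m : nat) (W : normedModType R)
    (U : set 'rV[R]_m) (f : 'rV[R]_m -> W) : Prop :=
  forall k, smooth_k U k f.

Definition vder (R : realType) (m : nat) (X : 'rV[R]_m -> 'rV[R]_m)
    (f : 'rV[R]_m -> R) : 'rV[R]_m -> R :=
  fun x => 'D_(X x) f x.

(* Lie bracket [X,Y] = DY.X - DX.Y, so that [X,Y]f = X(Yf) - Y(Xf). *)
Definition lie (R : realType) (m : nat) (X Y : 'rV[R]_m -> 'rV[R]_m)
    : 'rV[R]_m -> 'rV[R]_m :=
  fun x => 'D_(X x) Y x - 'D_(Y x) X x.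

Definition act (R : realType) (m : nat) (psi : 'rV[R]_m -> 'M[R]_m)
    (X : 'rV[R]_m -> 'rV[R]_m) : 'rV[R]_m -> 'rV[R]_m :=
  fun x => X x *m psi x.

Definition form (R : realType) (m : nat) (tau : 'rV[R]_m -> 'cV[R]_m)
    (X : 'rV[R]_m -> 'rV[R]_m) : 'rV[R]_m -> R :=
  fun x => (X x *m tau x) 0 0.

Definition metric (R : realType) (m : nat) (g : 'rV[R]_m -> 'M[R]_m)
    (X Y : 'rV[R]_m -> 'rV[R]_m) : 'rV[R]_m -> R :=
  fun x => (X x *m g x *m (Y x)^T) 0 0.

Definition two_dtau (R : realType) (m : nat) (tau : 'rV[R]_m -> 'cV[R]_m)
    (X Y : 'rV[R]_m -> 'rV[R]_m) : 'rV[R]_m -> R :=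
  fun x => vder X (form tau Y) x - vder Y (form tau X) x
           - form tau (lie X Y) x.

Definition nijenhuis (R : realType) (m : nat) (psi : 'rV[R]_m -> 'M[R]_m)
    (X Y : 'rV[R]_m -> 'rV[R]_m) : 'rV[R]_m -> 'rV[R]_m :=
  fun x => act psi (act psi (lie X Y)) x + lie (act psi X) (act psi Y) x
           - act psi (lie (act psi X) Y) x - act psi (lie X (act psi Y)) x.

Record almost_paracontact_metric (R : realType) (m : nat)
    (U : set 'rV[R]_m) (psi : 'rV[R]_m -> 'M[R]_m)
    (zeta : 'rV[R]_m -> 'rV[R]_m) (tau : 'rV[R]_m -> 'cV[R]_m)
    (g : 'rV[R]_m -> 'M[R]_m) : Prop := {
  apcm_psi_smooth : smooth U psi;
  apcm_zeta_smooth : smooth U zeta;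
  apcm_tau_smooth : smooth U tau;
  apcm_g_smooth : smooth U g;
  apcm_g_sym : forall x, U x -> (g x)^T = g x;
  apcm_g_nondeg : forall x, U x -> g x \in unitmx;
  apcm_psi2 : forall x (v : 'rV[R]_m), U x ->
      v *m psi x *m psi x = v - (v *m tau x) 0 0 *: zeta x;
  apcm_tau_zeta : forall x, U x -> (zeta x *m tau x) 0 0 = 1;
  apcm_compat : forall x (v w : 'rV[R]_m), U x ->
      ((v *m psi x) *m g x *m (w *m psi x)^T) 0 0
      = - (v *m g x *m w^T) 0 0 + (v *m tau x) 0 0 * (w *m tau x) 0 0
}.

Record para_sasakian (R : realType) (m : nat)
    (U : set 'rV[R]_m) (psi : 'rV[R]_m -> 'M[R]_m)
    (zeta : 'rV[R]_m -> 'rV[R]_m) (tau : 'rV[R]_m -> 'cV[R]_m)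
    (g : 'rV[R]_m -> 'M[R]_m) : Prop := {
  ps_apcm : almost_paracontact_metric U psi zeta tau g;
  ps_contact : forall X Y : 'rV[R]_m -> 'rV[R]_m, smooth U X -> smooth U Y ->
      forall x, U x -> two_dtau tau X Y x = 2 * metric g X (act psi Y) x;
  ps_normal : forall X Y : 'rV[R]_m -> 'rV[R]_m, smooth U X -> smooth U Y ->
      forall x, U x -> nijenhuis psi X Y x - two_dtau tau X Y x *: zeta x = 0
}.

Definition pang (R : realType) (m : nat) (zeta : 'rV[R]_m -> 'rV[R]_m)
    (tau : 'rV[R]_m -> 'cV[R]_m) (X Y : 'rV[R]_m -> 'rV[R]_m)
    : 'rV[R]_m -> R :=
  fun x => - form tau (lie (lie zeta X) Y) x.

(* X is a (smooth) section of V^+ (eps = 1) or V^- (eps = -1) on U *)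
Definition section_eig (R : realType) (m : nat) (U : set 'rV[R]_m)
    (psi : 'rV[R]_m -> 'M[R]_m) (eps : R) (X : 'rV[R]_m -> 'rV[R]_m) : Prop :=
  smooth U X /\ forall x, U x -> act psi X x = eps *: X x.

(* Let X, Y be sections of V^eps (eps = 1 or -1) and W = [zeta, X]. From
   psi^2 = Id - tau (x) zeta we get psi zeta = 0 and tau(X) = tau(Y) = 0, and
   compatibility gives g(zeta, X) = 0, hence tau(W) = -2 dtau(zeta, X)
   = -2 g(zeta, psi X) = 0. Normality at (zeta, X) then reads
   psi^2 W - eps psi W = 0, so psi W = eps W, and compatibility gives
   g(W, Y) = -g(psi W, psi Y) = -g(W, Y) = 0. Since tau vanishes on W and Y,
   Pi(X, Y) = -tau([W, Y]) = 2 dtau(W, Y) = 2 eps g(W, Y) = 0.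
   The chart model only provides directional derivatives, so linearity of
   v |-> D_v f for C^1 maps is derived from the mean value theorem, and
   dtau(W, Y) is evaluated on constant fields. *)

From Pilot Require Import Defs.
From HB Require Import structures.
From mathcomp Require Import all_boot all_order all_algebra.
From mathcomp Require Import all_classical all_reals all_analysis.
Set Implicit Arguments. Unset Strict Implicit. Unset Printing Implicit Defensive.
Import Order.TTheory GRing.Theory Num.Theory.
Import numFieldNormedType.Exports.
Local Open Scope classical_set_scope.
Local Open Scope ring_scope.

Section directional_derivative.
Context {R : realType} {V : normedModType R}.
Implicit Types (f G : V -> R) (b v w y : V).

Lemma is_derive_along_line f b w (t : R) :
  derivable f (t *: w + b) w ->
  is_derive t 1 (fun s : R => f (s *: w + b)) ('D_w f (t *: w + b)).
Proof.
have E : (fun h : R => h^-1 *: (((fun s : R => f (s *: w + b)) \o shift t) (h *: 1)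
     - f (t *: w + b))) =
  (fun h => h^-1 *: ((f \o shift (t *: w + b)) (h *: w) - f (t *: w + b))).
  apply/funext => h /=; congr (_ *: (f _ - _)).
  by rewrite scalerDl [h *: 1]mulr1 addrA.
by move=> df; split; rewrite /derivable /derive ?E.
Qed.

Lemma MVT_along_line f b w (h : R) :
  (forall t, `|t| <= `|h| -> derivable f (t *: w + b) w) ->
  exists c, `|c| <= `|h| /\ f (h *: w + b) - f b = h * 'D_w f (c *: w + b).
Proof.
move=> df.
have cont t : `|t| <= `|h| -> {for t, continuous (fun s : R => f (s *: w + b))}.
  move=> /df /is_derive_along_line [d _].
  by apply: differentiable_continuous; apply/derivable1_diffP.
have [h0|h0] := leP 0 h.
  have [] := @MVT_segment R (fun s : R => f (s *: w + b))
     (fun s : R => 'D_w f (s *: w + b)) 0 h h0.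
  - move=> s; rewrite in_itv /= => /andP[s0 sh].
    apply: is_derive_along_line; apply: df.
    by rewrite (ger0_norm (ltW s0)) (ger0_norm h0) ltW.
  - apply: continuous_in_subspaceT => s; rewrite inE /= in_itv /= => /andP[s0 sh].
    by apply: cont; rewrite !ger0_norm.
  move=> c; rewrite in_itv /= => /andP[c0 ch].
  rewrite scale0r add0r subr0 mulrC => E.
  by exists c; split => //; rewrite !ger0_norm.
have [] := @MVT_segment R (fun s : R => f (s *: w + b))
     (fun s : R => 'D_w f (s *: w + b)) h 0 (ltW h0).
- move=> s; rewrite in_itv /= => /andP[hs s0].
  apply: is_derive_along_line; apply: df.
  by rewrite !ltr0_norm // lerN2 ltW.
- apply: continuous_in_subspaceT => s; rewrite inE /= in_itv /= => /andP[hs s0].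
  by apply: cont; rewrite !ler0_norm ?lerN2 // ltW.
move=> c; rewrite in_itv /= => /andP[hc c0]; rewrite scale0r add0r sub0r => E.
exists c; split; first by rewrite !ler0_norm ?lerN2 // ltW.
by rewrite -opprB E mulrN opprK mulrC.
Qed.

(* The mean value theorem moves the increment along [w] to a point that tends
   to [y] with [h]; this is where continuity of ['D_w f] is used. *)
Lemma dquot_along_shifted_line_cvg (U : set V) f G y v w (c : R) :
  open U -> U y -> (forall z u, U z -> derivable f z u) ->
  (forall z, U z -> 'D_w f z = G z) -> {for y, continuous G} ->
  (fun h : R => h^-1 *: (f ((h * c) *: w + (h *: v + y)) - f (h *: v + y)))
    @ 0^' --> c * G y.
Proof.
move=> oU Uy df DG Gc; apply/cvgrPdist_lt => e e0.
have c1 : 0 < `|c| + 1 by rewrite ltr_wpDl.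
have e1 : 0 < e / (`|c| + 1) by rewrite divr_gt0.
have N1 : \forall z \near y, `|G y - G z| < e / (`|c| + 1).
  exact: (cvgrPdist_lt _ _).1 Gc _ e1.
have N2 : \forall z \near y, U z by apply: open_nbhs_nbhs.
have [r r0 Hr] := (nbhs_ballP _ _).1 (filterI N1 N2).
have K0 : 0 < `|v| + `|c| * `|w| + 1 by rewrite ltr_wpDl // addr_ge0 // mulr_ge0.
have r1 : 0 < r / (`|v| + `|c| * `|w| + 1) by rewrite divr_gt0.
near=> h.
have hr : `|h| < r / (`|v| + `|c| * `|w| + 1) by near: h; apply: dnbhs0_lt.
have h0 : h != 0 by near: h; exact: nbhs_dnbhs_neq.
have inb t : `|t| <= `|h * c| -> ball y r (t *: w + (h *: v + y)).
  move=> ht; rewrite -ball_normE /= addrA opprD addrCA subrr addr0 normrN.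
  rewrite (le_lt_trans (ler_normD _ _)) //.
  move: hr; rewrite ltr_pdivlMr // => /(le_lt_trans _); apply.
  rewrite !normrZ; apply: (@le_trans _ _ (`|h| * `|c| * `|w| + `|h| * `|v|)).
    by rewrite lerD // ler_wpM2r // -normrM.
  by rewrite !mulrDr mulr1 mulrA [X in X <= _]addrC lerDl.
have [t [th ->]] := MVT_along_line (fun t ht => df _ _ (Hr _ (inb t ht)).2).
have [Gt Ut] := Hr _ (inb _ th).
rewrite scalerA mulrA mulVf // mul1r DG // -mulrBr normrM.
apply: (le_lt_trans (ler_wpM2l (normr_ge0 c) (ltW Gt))).
rewrite -[ltRHS](divfK (lt0r_neq0 c1)) mulrC.
by rewrite (ltr_pM2l e1) ltrDl.
Unshelve. all: by end_near.
Qed.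

Lemma is_derive_directionDZ (U : set V) f G y v w (c : R) :
  open U -> U y -> (forall z u, U z -> derivable f z u) ->
  (forall z, U z -> 'D_w f z = G z) -> {for y, continuous G} ->
  is_derive y (v + c *: w) f ('D_v f y + c * 'D_w f y).
Proof.
move=> oU Uy df DG Gc.
pose q1 h := h^-1 *: (f ((h * c) *: w + (h *: v + y)) - f (h *: v + y)).
pose q2 h := h^-1 *: ((f \o shift y) (h *: v) - f y).
have dquot_split : (fun h : R => h^-1 *: ((f \o shift y) (h *: (v + c *: w)) - f y))
    = q1 + q2.
  rewrite addrfctE; apply/funext => h; rewrite /q1 /q2 /= -scalerDr addrA subrK.
  by congr (_ *: (f _ - _)); rewrite scalerDr scalerA addrA [_ *: w + _]addrC.
have qc : (fun h : R => h^-1 *: ((f \o shift y) (h *: (v + c *: w)) - f y))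
    @ 0^' --> c * G y + 'D_v f y.
  rewrite dquot_split; exact: cvgD (dquot_along_shifted_line_cvg v oU Uy df DG Gc)
                          (df y v Uy : q2 @ 0^' --> 'D_v f y).
rewrite DG // [_ + c * _]addrC; apply: DeriveDef; last exact: cvg_lim qc.
by apply/cvg_ex; eexists; exact: qc.
Qed.

End directional_derivative.

Section derive_row_direction.
Context {R : realType} {m : nat}.
Implicit Types (U : set 'rV[R]_m) (y : 'rV[R]_m).

Lemma derive_row_directionE U (f : 'rV[R]_m -> R) y :
  open U -> U y -> (forall z u, U z -> derivable f z u) ->
  (forall w, exists2 G : 'rV[R]_m -> R,
     forall z, U z -> 'D_w f z = G z & {for y, continuous G}) ->
  forall v, 'D_v f y = \sum_(i < m) v 0 i * 'D_(delta_mx 0 i) f y.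
Proof.
move=> oU Uy df HG v; rewrite {1}(row_sum_delta v).
apply: (big_ind2 (fun a b => 'D_a f y = b)); first exact: derive0.
  move=> a b c d Dab Dcd; have [G DG Gc] := HG c.
  have := is_derive_directionDZ a 1 oU Uy df DG Gc.
  by rewrite scale1r mul1r => Dac; rewrite derive_val Dab Dcd.
move=> i _; have [G DG Gc] := HG (delta_mx 0 i).
have := is_derive_directionDZ 0 (v 0 i) oU Uy df DG Gc.
by rewrite add0r derive0 add0r => Dvi; rewrite derive_val.
Qed.

Lemma derive_mx_row_directionE p q U (f : 'rV[R]_m -> 'M[R]_(p, q)) y :
  open U -> U y -> (forall z u, U z -> derivable f z u) ->
  (forall w, {for y, continuous ('D_w f)}) ->
  forall v, 'D_v f y = \sum_(i < m) v 0 i *: 'D_(delta_mx 0 i) f y.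
Proof.
move=> oU Uy df Dfc v; apply/matrixP => a b.
rewrite (derive_mx (df _ _ Uy)) mxE summxE.
under eq_bigr do rewrite mxE (derive_mx (df _ _ Uy)) mxE.
apply: (derive_row_directionE oU Uy).
  by move=> z u Uz; move/derivable_mxP: (df z u Uz); apply.
move=> w; exists (fun z => 'D_w f z a b).
  by move=> z Uz; rewrite (derive_mx (df _ _ Uz)) mxE.
apply: (@continuous_comp _ _ _ ('D_w f) (fun M : 'M[R]_(p, q) => M a b) y (Dfc w)).
exact: coord_continuous.
Qed.

Lemma derive_mx_directionZ p q U (f : 'rV[R]_m -> 'M[R]_(p, q)) y (e : R) v :
  open U -> U y -> (forall z u, U z -> derivable f z u) ->
  (forall w, {for y, continuous ('D_w f)}) ->
  'D_(e *: v) f y = e *: 'D_v f y.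
Proof.
move=> oU Uy df Dfc; rewrite !(derive_mx_row_directionE oU Uy df Dfc).
by rewrite scaler_sumr; apply: eq_bigr => i _; rewrite mxE scalerA.
Qed.

End derive_row_direction.

Lemma is_derive_mulmx00 {R : realType} {V : normedModType R} {k : nat}
    (A : V -> 'M[R]_(1, k)) (B : V -> 'M[R]_(k, 1)) x v :
  derivable A x v -> derivable B x v ->
  is_derive x v (fun z => (A z *m B z) 0 0)
    (('D_v A x *m B x) 0 0 + (A x *m 'D_v B x) 0 0).
Proof.
move=> dA dB.
have dA' i : derivable (fun z => A z 0 i) x v by move/derivable_mxP: dA; apply.
have dB' i : derivable (fun z => B z i 0) x v by move/derivable_mxP: dB; apply.
have -> : (fun z => (A z *m B z) 0 0) =
    \sum_(i < k) ((fun z => A z 0 i) * (fun z => B z i 0)).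
  by rewrite fct_sumE; apply/funext => z; rewrite mxE.
apply: DeriveDef; first by apply: derivable_sum => i; exact: derivableM.
rewrite derive_sum; last by move=> i; exact: derivableM.
rewrite !mxE -big_split /=; apply: eq_bigr => i _.
rewrite deriveM // (derive_mx dA) (derive_mx dB) !mxE addrC.
by congr (_ + _); exact: mulrC.
Qed.

Section paracontact_algebra.
Context {R : numFieldType} {m : nat}.
Variables (P : 'M[R]_m) (Z : 'rV[R]_m) (T : 'cV[R]_m).
Hypothesis P2 : forall v, v *m P *m P = v - (v *m T) 0 0 *: Z.
Hypothesis ZT : (Z *m T) 0 0 = 1.

Let scalemx00 (a : R) (v : 'rV[R]_m) : ((a *: v) *m T) 0 0 = a * (v *m T) 0 0.
Proof. by rewrite -scalemxAl mxE. Qed.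

Lemma paracontact_kernel : Z *m P = 0.
Proof.
have ZPP : Z *m P *m P = 0 by rewrite P2 ZT scale1r subrr.
set c := (Z *m P *m T) 0 0.
have ZP : Z *m P = c *: Z.
  by apply/eqP; rewrite -subr_eq0 -P2 ZPP mul0mx.
have cc : c * c = 0.
  move: (congr1 (fun A => (A *m T) 0 0) ZPP) => /=.
  by rewrite {1}ZP -scalemxAl ZP scalerA scalemx00 ZT mulr1 mul0mx mxE.
have c0 : c = 0 by apply/eqP; rewrite -[c == 0]orbb -mulf_eq0 cc.
by rewrite ZP c0 scale0r.
Qed.

Lemma paracontact_eigen_form0 (v : 'rV[R]_m) (e : R) :
  e * e = 1 -> v *m P = e *: v -> (v *m T) 0 0 = 0.
Proof.
move=> ee vP.
have : v *m P *m P = v by rewrite vP -scalemxAl vP scalerA ee scale1r.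
rewrite P2 => /eqP; rewrite subr_eq addrC -subr_eq subrr eq_sym => /eqP vTZ.
move: (congr1 (fun w => (w *m T) 0 0) vTZ) => /=.
by rewrite scalemx00 ZT mulr1 => ->; rewrite mul0mx mxE.
Qed.

End paracontact_algebra.

Section chart_calculus.
Context {R : realType} {m : nat}.
Local Notation V := 'rV[R]_m.
Implicit Types (U : set V) (X Y F : V -> V) (tau : V -> 'cV[R]_m).

Lemma smooth_cst {W : normedModType R} U (a : W) : smooth U (cst a).
Proof.
move=> k; elim: k a => [|k IHk] a /=; first by move=> x _; exact: cst_continuous.
split=> [x v _|v]; first exact: derivable_cst.
have -> : 'D_v (cst a) = cst (0 : W) by apply/funext => z; rewrite derive_cst.
exact: IHk.
Qed.

Lemma derivable_scalemx p q (k : V -> R) (F : V -> 'M[R]_(p, q)) x v :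
  derivable k x v -> derivable F x v -> derivable (fun z => k z *: F z) x v.
Proof.
move=> dk dF; apply/derivable_mxP => i j.
have -> : (fun z => (k z *: F z) i j) = k * (fun z => F z i j).
  by apply/funext => z; rewrite mxE.
by apply: derivableM => //; move/derivable_mxP: dF; apply.
Qed.

Lemma derivable_derive_along U X F x v :
  open U -> smooth U X -> smooth U F -> U x ->
  derivable (fun z => 'D_(X z) F z) x v.
Proof.
move=> oU sX sF Ux.
pose DF i z := X z 0 i *: 'D_(delta_mx 0 i) F z.
apply: (@near_eq_derivable _ _ _ (\sum_(i < m) DF i)).
  near=> z; rewrite fct_sumE.
  have Uz : U z by near: z; exact: open_nbhs_nbhs.
  by rewrite (derive_mx_row_directionE oU Uz (sF 1%N).1 (fun w => (sF 1%N).2 w z Uz)).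
apply: derivable_sum => i; apply: derivable_scalemx.
  by move/derivable_mxP: ((sX 1%N).1 x v Ux); apply.
exact: ((sF 2%N).2 (delta_mx 0 i)).1 x v Ux.
Unshelve. all: by end_near.
Qed.

Lemma derivable_lie U X Y x v :
  open U -> smooth U X -> smooth U Y -> U x -> derivable (lie X Y) x v.
Proof.
move=> oU sX sY Ux.
apply: (derivableB (f := fun z => 'D_(X z) Y z) (g := fun z => 'D_(Y z) X z)).
  exact: derivable_derive_along oU sX sY Ux.
exact: derivable_derive_along oU sY sX Ux.
Qed.

Lemma derive_form_cst tau (b : V) x (a : V) :
  derivable tau x a -> 'D_a (Defs.form tau (cst b)) x = (b *m 'D_a tau x) 0 0.
Proof.
move=> dtau; have [_ ->] := is_derive_mulmx00 (derivable_cst b x a) dtau.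
by rewrite derive_cst mul0mx mxE add0r.
Qed.

Lemma two_dtau_cst tau (a b x : V) :
  derivable tau x a -> derivable tau x b ->
  two_dtau tau (cst a) (cst b) x = (b *m 'D_a tau x) 0 0 - (a *m 'D_b tau x) 0 0.
Proof.
move=> dtau_a dtau_b; rewrite /two_dtau /vder /=.
rewrite (derive_form_cst b dtau_a) (derive_form_cst a dtau_b).
have -> : Defs.form tau (lie (cst a) (cst b)) x = 0.
  by rewrite /Defs.form /lie !derive_cst subrr mul0mx mxE.
by rewrite subr0.
Qed.

(* On sections of [ker tau] only the bracket term of [2 dtau] survives, so
   [tau([X, Y])] is tensorial and can be computed from constant fields. *)
Lemma form_lie_ker tau X Y x :
  (\forall z \near x, Defs.form tau X z = 0) ->
  (\forall z \near x, Defs.form tau Y z = 0) ->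
  derivable X x (Y x) -> derivable Y x (X x) ->
  derivable tau x (X x) -> derivable tau x (Y x) ->
  Defs.form tau (lie X Y) x = - two_dtau tau (cst (X x)) (cst (Y x)) x.
Proof.
move=> tX tY dX dY dtX dtY.
have tDY : ('D_(X x) Y x *m tau x) 0 0 = - (Y x *m 'D_(X x) tau x) 0 0.
  apply/eqP; rewrite -addr_eq0; have [_ <-] := is_derive_mulmx00 dY dtX.
  by rewrite (near_eq_derive _ tY) derive_cst.
have tDX : ('D_(Y x) X x *m tau x) 0 0 = - (X x *m 'D_(Y x) tau x) 0 0.
  apply/eqP; rewrite -addr_eq0; have [_ <-] := is_derive_mulmx00 dX dtY.
  by rewrite (near_eq_derive _ tX) derive_cst.
have sub00 (A B : 'M[R]_1) : (A - B) 0 0 = A 0 0 - B 0 0 by rewrite !mxE.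
rewrite two_dtau_cst // /Defs.form /lie mulmxBl sub00 tDY tDX.
by rewrite opprK opprB addrC.
Qed.

End chart_calculus.

Section para_sasakian_eigensections.
Context {R : realType} {m : nat}.
Local Notation V := 'rV[R]_m.
Variables (U : set V) (psi : V -> 'M[R]_m) (zeta : V -> V).
Variables (tau : V -> 'cV[R]_m) (g : V -> 'M[R]_m) (eps : R).
Hypothesis oU : open U.
Hypothesis PS : para_sasakian U psi zeta tau g.
Hypothesis eps2 : eps * eps = 1.
Implicit Types X Y F : V -> V.

Let apcm := ps_apcm PS.

Let near_in_open x : U x -> \forall z \near x, U z.
Proof. by move=> Ux; apply: open_nbhs_nbhs. Qed.

Lemma zeta_psi0 z : U z -> zeta z *m psi z = 0.
Proof.
move=> Uz.
exact: paracontact_kernel (fun v => apcm_psi2 apcm v Uz) (apcm_tau_zeta apcm Uz).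
Qed.

Lemma tau_section_eig X z :
  section_eig U psi eps X -> U z -> (X z *m tau z) 0 0 = 0.
Proof.
move=> [_ eX] Uz.
have eigen_form0 := paracontact_eigen_form0 (fun v => apcm_psi2 apcm v Uz)
  (apcm_tau_zeta apcm Uz).
exact: eigen_form0 _ _ eps2 (eX z Uz).
Qed.

Lemma metric_zeta_section_eig X z :
  section_eig U psi eps X -> U z -> (zeta z *m g z *m (X z)^T) 0 0 = 0.
Proof.
move=> sX Uz; have := apcm_compat apcm (zeta z) (X z) Uz.
rewrite zeta_psi0 // !mul0mx (apcm_tau_zeta apcm Uz) mul1r.
rewrite (tau_section_eig sX Uz) addr0.
by rewrite mxE => /eqP; rewrite eq_sym oppr_eq0 => /eqP.
Qed.

Lemma lie_psi_zeta F z : U z -> lie (act psi zeta) F z = 0.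
Proof.
move=> Uz; rewrite /lie /act zeta_psi0 // derive0 sub0r.
rewrite (@near_eq_derive _ _ _ _ (cst 0)) ?derive_cst ?oppr0 //.
by near=> y; rewrite zeta_psi0 //; near: y; exact: near_in_open.
Unshelve. all: by end_near.
Qed.

Lemma lie_zeta_act_section_eig X z :
  section_eig U psi eps X -> U z -> lie zeta (act psi X) z = eps *: lie zeta X z.
Proof.
move=> [sX eX] Uz; have sZ := apcm_zeta_smooth apcm.
rewrite /lie (@near_eq_derive _ _ _ _ (eps \*: X)); last first.
  by near=> y; rewrite eX //; near: y; exact: near_in_open.
rewrite deriveZ; last exact: (sX 1%N).1.
rewrite eX // (derive_mx_directionZ _ _ oU Uz (sZ 1%N).1) ?scalerBr //.
by move=> w; exact: (sZ 1%N).2 w z Uz.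
Unshelve. all: by end_near.
Qed.

Lemma two_dtau_zeta_section_eig X z :
  section_eig U psi eps X -> U z -> two_dtau tau zeta X z = 0.
Proof.
move=> sX Uz; rewrite (ps_contact PS (apcm_zeta_smooth apcm) sX.1 Uz).
rewrite /metric sX.2 // linearZ /= -scalemxAr mxE.
by rewrite metric_zeta_section_eig // !mulr0.
Qed.

Lemma tau_lie_zeta_section_eig X z :
  section_eig U psi eps X -> U z -> (lie zeta X z *m tau z) 0 0 = 0.
Proof.
move=> sX Uz; have := two_dtau_zeta_section_eig sX Uz.
rewrite /two_dtau /vder (@near_eq_derive _ _ _ _ (cst 0) z (zeta z)); last first.
  by near=> y; apply: tau_section_eig sX _; near: y; exact: near_in_open.
rewrite (@near_eq_derive _ _ _ _ (cst (1 : R)) z (X z)); last first.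
  by near=> y; apply: (apcm_tau_zeta apcm); near: y; exact: near_in_open.
by rewrite !derive_cst subrr sub0r => /eqP; rewrite oppr_eq0 => /eqP.
Unshelve. all: by end_near.
Qed.

Lemma act_lie_zeta_section_eig X x :
  section_eig U psi eps X -> U x -> lie zeta X x *m psi x = eps *: lie zeta X x.
Proof.
move=> sX Ux; have := ps_normal PS (apcm_zeta_smooth apcm) sX.1 Ux.
rewrite two_dtau_zeta_section_eig // scale0r subr0 /nijenhuis.
have -> : act psi (lie (act psi zeta) X) x = 0.
  by change (lie (act psi zeta) X x *m psi x = 0); rewrite lie_psi_zeta // mul0mx.
have -> : act psi (lie zeta (act psi X)) x = (eps *: lie zeta X x) *m psi x.
  by change (lie zeta (act psi X) x *m psi x = (eps *: lie zeta X x) *m psi x);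
    rewrite lie_zeta_act_section_eig.
rewrite lie_psi_zeta // addr0 subr0 /act (apcm_psi2 apcm (lie zeta X x) Ux).
rewrite tau_lie_zeta_section_eig // scale0r subr0 => /eqP; rewrite subr_eq0 => /eqP.
by move=> {2}->; rewrite -scalemxAl scalerA eps2 scale1r.
Qed.

Lemma metric_lie_zeta_section_eig X Y x :
  section_eig U psi eps X -> section_eig U psi eps Y -> U x ->
  (lie zeta X x *m g x *m (Y x)^T) 0 0 = 0.
Proof.
move=> sX sY Ux; have eY : Y x *m psi x = eps *: Y x := sY.2 x Ux.
have sc00 (a : R) (M : 'M[R]_1) : (a *: M) 0 0 = a * M 0 0 by rewrite mxE.
have := apcm_compat apcm (lie zeta X x) (Y x) Ux.
rewrite act_lie_zeta_section_eig // eY tau_lie_zeta_section_eig // mul0r addr0.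
rewrite linearZ /= -!scalemxAl -scalemxAr !sc00 mulrA eps2 mul1r.
by move/eqP; rewrite -addr_eq0 -mulr2n mulrn_eq0 /= => /eqP.
Qed.

Lemma pang_section_eig X Y x :
  section_eig U psi eps X -> section_eig U psi eps Y -> U x ->
  pang zeta tau X Y x = 0.
Proof.
move=> sX sY Ux; have eY : Y x *m psi x = eps *: Y x := sY.2 x Ux.
have [sZ sT] := (apcm_zeta_smooth apcm, apcm_tau_smooth apcm).
have tW : \forall z \near x, Defs.form tau (lie zeta X) z = 0.
  by near=> z; apply: tau_lie_zeta_section_eig sX _; near: z; exact: near_in_open.
have tY : \forall z \near x, Defs.form tau Y z = 0.
  by near=> z; apply: tau_section_eig sY _; near: z; exact: near_in_open.
rewrite /pang (form_lie_ker tW tY (derivable_lie oU sZ sX.1 Ux) ((sY.1 1%N).1 _ _ Ux)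
  ((sT 1%N).1 _ _ Ux) ((sT 1%N).1 _ _ Ux)) opprK.
rewrite (ps_contact PS (smooth_cst U _) (smooth_cst U _) Ux) /metric /act /= eY.
by rewrite linearZ /= -scalemxAr mxE metric_lie_zeta_section_eig // !mulr0.
Unshelve. all: by end_near.
Qed.

End para_sasakian_eigensections.

Theorem corollary4p6 (R : realType) (n : nat) (U : set 'rV[R]_(n.*2.+1))
    (psi : 'rV[R]_(n.*2.+1) -> 'M[R]_(n.*2.+1))
    (zeta : 'rV[R]_(n.*2.+1) -> 'rV[R]_(n.*2.+1))
    (tau : 'rV[R]_(n.*2.+1) -> 'cV[R]_(n.*2.+1))
    (g : 'rV[R]_(n.*2.+1) -> 'M[R]_(n.*2.+1)) :
  open U -> para_sasakian U psi zeta tau g ->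
  (forall X Y, section_eig U psi 1 X -> section_eig U psi 1 Y ->
     forall x, U x -> pang zeta tau X Y x = 0) /\
  (forall X Y, section_eig U psi (-1) X -> section_eig U psi (-1) Y ->
     forall x, U x -> pang zeta tau X Y x = 0).
Proof.
have eps2 : (-1 : R) * -1 = 1 by rewrite mulrNN mulr1.
move=> oU PS; split=> X Y sX sY x Ux.
  by have := pang_section_eig oU PS (mulr1 (1 : R)) sX sY Ux.
by have := pang_section_eig oU PS eps2 sX sY Ux.
Qed.
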